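(* Let $\mathcal Z$ be a set, $\mathcal H\subseteq\{0,1\}^{\mathcal Z}$, $h^\star\in\mathcal H$, and $\mathcal D$ a distribution on $\mathcal Z$ with $p:=\Pr_{Z\sim\mathcal D}(h^\star(Z)=1)>0$. Then for costs $c_{\mathrm{rew}},c_{\mathrm{ver}}>0$, \[ J^\star(h^\star,\mathcal D)=\frac{c_{\mathrm{rew}}}{p}+c_{\mathrm{ver}}. \]
   Context: Binary active search: a policy keeps a pool of generated unverified points and at each step, as a (possibly randomized) function of its history, either generates a fresh $Z\sim\mathcal D$ (cost $c_{\mathrm{rew}}$, $Z$ observed, added to the pool) or verifies a pool point $Z$ (cost $c_{\mathrm{ver}}$, observes $h^\star(Z)$, removes $Z$; stops and outputs $Z$ if the label is $1$). It is sound if it stops only upon observing label $1$. The cost is $c_{\mathrm{rew}}N_{\mathrm{rew}}+c_{\mathrm{ver}}N_{\mathrm{ver}}$, $+\infty$ if no positive is observed. $J^\star(h^\star,\mathcal D)$ is the infimum of expected cost over all such policies that know $(h^\star,\mathcal D)$. *)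

From HB Require Import structures.
From mathcomp Require Import all_boot all_order all_algebra.
From mathcomp Require Import all_classical all_reals all_analysis.

Set Implicit Arguments.
Unset Strict Implicit.
Unset Printing Implicit Defensive.

Import Order.TTheory GRing.Theory Num.Theory.
Local Open Scope classical_set_scope.
Local Open Scope ring_scope.

(** A history is the sequence of observations made so far:
  - [EGen z] : a fresh point [z] was generated (and observed);
  - [EVer i b] : the [i]-th point of the current pool was verified, and
    the label [b] was observed (the point is removed from the pool). *)

Inductive event (Z : Type) :=
| EGen of Z
| EVer of nat & bool.
Arguments EGen {Z}.
Arguments EVer {Z}.

Definition pool_step (Z : Type) (pl : seq Z) (e : event Z) : seq Z :=
  match e with
  | EGen z => rcons pl z
  | EVer i _ => take i pl ++ drop i.+1 pl
  end.

Definition pool (Z : Type) (h : seq (event Z)) : seq Z := foldl (@pool_step Z) [::] h.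

(** A (possibly randomized, behavioural) policy maps each history to a
  probability distribution on the available actions, encoded by weights
  [pol h : nat -> R]: weight [pol h 0] is the probability of generating a
  fresh point, weight [pol h i.+1] the probability of verifying the [i]-th
  pool point ([i < size (pool h)]). *)
Definition policy (Z : Type) (R : realType) := seq (event Z) -> nat -> R.

Definition valid_policy (Z : Type) (R : realType) (pol : policy Z R) : Prop :=
  forall h : seq (event Z),
    (forall i, 0 <= pol h i) /\
    (forall i, (size (pool h) < i)%N -> pol h i = 0) /\
    \sum_(i < (size (pool h)).+1) pol h i = 1.

Section Cost.
Context (d : measure_display) (Z : measurableType d) (R : realType).
Context (D : probability Z R) (hstar : Z -> bool) (c_rew c_ver : R).
Local Open Scope ereal_scope.

Definition pool_label (h : seq (event Z)) (j : nat) : bool :=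
  if drop j (pool h) is z :: _ then hstar z else false.

(** [cost_upto pol n h] : expected cost accumulated during the next [n]
  steps of the policy started from history [h] (the process stops as soon
  as a label [1] is observed; the fresh point is drawn from [D]). *)
Fixpoint cost_upto (pol : policy Z R) (n : nat) (h : seq (event Z)) {struct n}
  : \bar R :=
  match n with
  | 0 => 0
  | n'.+1 =>
    \sum_(i < (size (pool h)).+1)
      (pol h i)%:E *
      (if (i == 0%N :> nat) then
         c_rew%:E + \int[D]_z cost_upto pol n' (rcons h (EGen z))
       else
         let j := (i.-1)%N in
         if pool_label h j then c_ver%:E
         else c_ver%:E + cost_upto pol n' (rcons h (EVer j false)))
  end.

(** Expected total cost [E[c_rew N_rew + c_ver N_ver]] (which is [+oo] on the
  event that no positive is ever observed): by monotone convergence it is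
  the supremum of the expected costs accumulated in the first [n] steps. *)
Definition expected_cost (pol : policy Z R) : \bar R :=
  ereal_sup (range (fun n => cost_upto pol n [::])).

Definition Jstar : \bar R :=
  ereal_inf [set expected_cost pol | pol in [set pol | valid_policy pol]].

End Cost.

From HB Require Import structures.
From mathcomp Require Import all_boot all_order all_algebra.
From mathcomp Require Import all_classical all_reals all_analysis.
From mathcomp Require Import measurable_realfun.
From mathcomp Require Import lra ring.

Set Implicit Arguments.
Unset Strict Implicit.
Unset Printing Implicit Defensive.

Import Order.TTheory GRing.Theory Num.Theory.
Local Open Scope classical_set_scope.
Local Open Scope ring_scope.

(* The only relevant state is whether the pool already holds a positive.
   Upper bound: the greedy policy verifies a known positive if there is one and
   generates otherwise; it pays c_rew per draw until the first positive draw
   (geometric, mean 1/p) plus one verification, so it costs at most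
   B := c_rew / p + c_ver.
   Lower bound: with m := min c_rew c_ver and rho := 1 - m / B, the potential
   W_n(true) = c_ver (1 - rho^n), W_n(false) = B (1 - rho^n) is a sub-solution
   of the n-step dynamic programme (rho is chosen so that one more step raises
   W by at most m, the price of the cheapest action), so every policy pays at
   least W_n(false) in its first n steps from the empty history; letting n grow
   gives B. *)

Section integral_lemmas.
Context (d : measure_display) (T : measurableType d) (R : realType).
Local Open Scope ereal_scope.

(* The integral of a nonnegative function is a supremum over the simple
   functions below it, so it is monotone even without measurability. *)
Lemma ge0_le_integral_nonmeas (mu : {measure set T -> \bar R})
    (f g : T -> \bar R) :
  (forall x, 0 <= f x) -> (forall x, f x <= g x) ->
  \int[mu]_x f x <= \int[mu]_x g x.
Proof.
move=> f0 fg; have g0 x : 0 <= g x by exact: le_trans (f0 x) (fg x).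
rewrite !ge0_integralTE //.
apply: ereal_sup_le => _ [h /= hf <-]; exists h => //= x.
exact: le_trans (hf x) (fg x).
Qed.

Lemma probability_integral_if (P : probability T R) (q : T -> bool) (p : R) :
  measurable [set x | q x] -> P [set x | q x] = p%:E -> forall a b : R,
  \int[P]_x (if q x then a else b)%:E = (a * p + b * (1 - p))%:E.
Proof.
move=> mq Pq a b; set A := [set x | q x].
rewrite -(setUv A) integral_setU //; last first.
- by rewrite disj_set2E setICr.
- rewrite setUv; apply/measurable_EFinP; apply: measurable_fun_ifT => //.
  by apply: (measurable_fun_bool true); rewrite setTI.
- exact: measurableC.
rewrite (@eq_integral _ _ _ _ A (cst a%:E)); last first.
  by move=> x; rewrite inE => ->.
rewrite (@eq_integral _ _ _ _ (~` A) (cst b%:E)); last first.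
  by move=> x; rewrite inE => /negP/negbTE ->.
rewrite !integral_cst //; last exact: measurableC.
have PC : (P : {measure set T -> \bar R}) (~` A) = (1 - p)%:E.
  by rewrite EFinB -Pq; exact: probability_setC.
have PA : (P : {measure set T -> \bar R}) A = p%:E by [].
by rewrite PC PA -!EFinM -EFinD.
Qed.

End integral_lemmas.

Lemma lee_of_geometric_lbounds (R : realType) (c r : R) (x : \bar R) :
  0 <= c -> 0 <= r -> r < 1 ->
  (forall n, ((c * (1 - r ^+ n))%:E <= x)%E) -> (c%:E <= x)%E.
Proof.
move=> c0 r0 r1 lbx; apply/lee_addgt0Pr => e e0.
have r_norm : `|r| < 1 by rewrite ger0_norm.
have [N _ rN] := (cvgrPdist_lt _ _).1 (cvg_expr r_norm) _
  (divr_gt0 e0 (ltr_pwDr ltr01 c0)).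
move: (rN N (leqnn N)).
rewrite /= sub0r normrN ger0_norm ?exprn_ge0 // ltr_pdivlMr ?ltr_pwDr //.
rewrite mulrDr mulr1 => rNe.
apply: le_trans (leeD2r _ (lbx N)); rewrite -EFinD lee_fin.
have := exprn_ge0 N r0; lra.
Qed.

Lemma convex_sum_ge (R : realType) (k : nat) (w : nat -> R) (F : 'I_k -> \bar R)
    (x : R) :
  (forall i, 0 <= w i) -> \sum_(i < k) w i = 1 -> (forall i, x%:E <= F i)%E ->
  (x%:E <= \sum_(i < k) (w i)%:E * F i)%E.
Proof.
move=> w0 w1 xF; have -> : x%:E = (\sum_(i < k) (w i)%:E * x%:E)%E.
  by rewrite sumEFin -mulr_suml w1 mul1r.
by apply: lee_sum => i _; apply: lee_wpmul2l; [rewrite lee_fin | exact: xF].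
Qed.

Lemma sum_nat_eq_weights (R : realType) (n k : nat) (F : 'I_n -> \bar R)
    (kn : (k < n)%N) :
  (\sum_(i < n) ((i == k :> nat)%:R)%:E * F i)%E = F (Ordinal kn).
Proof.
rewrite (bigD1 (Ordinal kn)) //= eqxx mul1e big1 ?adde0 // => i neq_ik.
have /negPf -> : (i != k :> nat).
  by apply: contraNneq neq_ik => ik; apply/eqP/val_inj.
by rewrite mul0e.
Qed.

Lemma sum_nat_eq (R : realType) (n k : nat) : (k < n)%N ->
  \sum_(i < n) ((i == k :> nat)%:R : R) = 1.
Proof.
move=> kn; rewrite (eq_bigr (fun i : 'I_n => if i == k :> nat then 1 else 0)).
  by rewrite -big_mkcond /= (big_ord1_eq _ (fun=> 1)) kn.
by move=> i _; case: eqP.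
Qed.

Lemma pool_rcons (Z : Type) (h : seq (event Z)) (e : event Z) :
  pool (rcons h e) = pool_step (pool h) e.
Proof. by rewrite /pool foldl_rcons. Qed.

Section pool_positives.
Context (d : measure_display) (Z : measurableType d) (hstar : Z -> bool).

Definition pool_has_pos (h : seq (event Z)) : bool := has hstar (pool h).

Lemma pool_has_pos_gen h z :
  pool_has_pos (rcons h (EGen z)) = hstar z || pool_has_pos h.
Proof. by rewrite /pool_has_pos pool_rcons /= has_rcons. Qed.

Lemma pool_has_pos_ver h j b :
  pool_has_pos (rcons h (EVer j b)) -> pool_has_pos h.
Proof.
rewrite /pool_has_pos pool_rcons /= has_cat => /orP[] /hasP[x xh hx];
  apply/hasP; exists x => //; [exact: mem_take xh | exact: mem_drop xh].
Qed.

Lemma pool_label_has_pos h j : pool_label hstar h j -> pool_has_pos h.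
Proof.
rewrite /pool_label; case hj: (drop j (pool h)) => [|z t] // hz.
by apply/hasP; exists z => //; apply: (mem_drop (n0 := j)); rewrite hj mem_head.
Qed.

Lemma pool_label_find h :
  pool_has_pos h -> pool_label hstar h (find hstar (pool h)).
Proof.
rewrite /pool_label /pool_has_pos; case: (pool h) => [|z s] // hs.
by rewrite (drop_nth z) ?nth_find // -has_find.
Qed.

End pool_positives.

Section active_search.
Context (d : measure_display) (Z : measurableType d) (R : realType).
Context (D : probability Z R) (hstar : Z -> bool) (c_rew c_ver p : R).
Hypothesis mpos : measurable [set z | hstar z].
Hypothesis Dpos : D [set z | hstar z] = p%:E.
Hypothesis p_gt0 : 0 < p.
Hypothesis c_rew_gt0 : 0 < c_rew.
Hypothesis c_ver_gt0 : 0 < c_ver.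

Let B := c_rew / p + c_ver.
Let m := Num.min c_rew c_ver.
Let rho := 1 - m / B.
Let cap (b : bool) := if b then c_ver else B.

Lemma p_le1 : p <= 1.
Proof. by rewrite -lee_fin -Dpos probability_le1. Qed.

Lemma B_gt0 : 0 < B. Proof. by rewrite addr_gt0 // divr_gt0. Qed.

Lemma B_mulp : B * p = c_rew + c_ver * p.
Proof. by rewrite mulrDl divfK // gt_eqF. Qed.

Lemma m_gt0 : 0 < m. Proof. by rewrite lt_min c_rew_gt0 c_ver_gt0. Qed.
Lemma m_le_rew : m <= c_rew. Proof. by rewrite ge_min lexx. Qed.
Lemma m_le_ver : m <= c_ver. Proof. by rewrite ge_min lexx orbT. Qed.

Lemma cap_gt0 b : 0 < cap b.
Proof. by case: b; rewrite ?B_gt0. Qed.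

Lemma cap_le_B b : cap b <= B.
Proof. by case: b => //=; rewrite lerDr ltW // divr_gt0. Qed.

Lemma m_le_B : m <= B.
Proof. exact: le_trans m_le_ver (cap_le_B true). Qed.

Lemma rho_ge0 : 0 <= rho.
Proof. by rewrite subr_ge0 ler_pdivrMr ?B_gt0 // mul1r m_le_B. Qed.

Lemma rho_lt1 : rho < 1.
Proof. by rewrite ltrBlDr ltrDl divr_gt0 // ?m_gt0 ?B_gt0. Qed.

Definition potential n b := cap b * (1 - rho ^+ n).

Lemma potential_ge0 n b : 0 <= potential n b.
Proof.
by rewrite mulr_ge0 ?subr_ge0 ?exprn_ile1 ?rho_ge0 ?(ltW rho_lt1)
  ?(ltW (cap_gt0 b)).
Qed.

Lemma potential_le_cap n b : potential n b <= cap b.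
Proof.
by rewrite ler_piMr ?gerBl ?exprn_ge0 ?rho_ge0 ?(ltW (cap_gt0 b)).
Qed.

Lemma potential_succ_le n b : potential n.+1 b <= potential n b + m.
Proof.
have -> : potential n.+1 b = potential n b + cap b / B * m * rho ^+ n.
  rewrite /potential exprSr /rho; field; exact: lt0r_neq0 B_gt0.
have capB : cap b / B <= 1 by rewrite ler_pdivrMr ?B_gt0 // mul1r cap_le_B.
have capB0 : 0 <= cap b / B by rewrite divr_ge0 ?(ltW B_gt0) ?(ltW (cap_gt0 b)).
have r0 := exprn_ge0 n rho_ge0; have r1 := exprn_ile1 n rho_ge0 (ltW rho_lt1).
rewrite lerD2l -mulrA [m * _]mulrC mulrA.
by rewrite ler_piMl ?(mulr_ile1 capB0 r0 capB r1) // ltW // m_gt0.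
Qed.

Lemma potential_gen n b :
  potential n.+1 b <= c_rew + potential n true * p + potential n b * (1 - p).
Proof.
case: b.
  by have := potential_succ_le n true; have := m_le_rew; lra.
rewrite /potential /= exprSr; have := exprn_ge0 n rho_ge0.
set r := rho ^+ n => r0.
have rhoB : r * rho * B = r * B - r * m.
  by rewrite -mulrA /rho mulrBl mul1r divfK ?mulrBr // lt0r_neq0 ?B_gt0.
have Bpr : B * p * r = c_rew * r + c_ver * p * r by rewrite B_mulp mulrDl.
have rm : r * m <= r * c_rew by rewrite ler_wpM2l // m_le_rew.
have := B_mulp; lra.
Qed.

Lemma potential_ver n (b b' : bool) :
  (b' -> b) -> potential n.+1 b <= c_ver + potential n b'.
Proof.
case: b => [_|].
  apply: le_trans (potential_le_cap n.+1 true) _.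
  by rewrite lerDl potential_ge0.
case: b' => [/(_ isT) //|_].
by have := potential_succ_le n false; have := m_le_ver; lra.
Qed.

Local Notation cost_upto := (cost_upto D hstar c_rew c_ver).
Local Notation expected_cost := (expected_cost D hstar c_rew c_ver).
Local Notation has_pos := (pool_has_pos hstar).

Lemma cost_upto_ge_potential pol : valid_policy pol ->
  forall n h, ((potential n (has_pos h))%:E <= cost_upto pol n h)%E.
Proof.
move=> vpol; elim=> [|n IH] h; first by rewrite /potential expr0 subrr mulr0.
have [pol_ge0 [_ pol_sum1]] := vpol h.
rewrite [cost_upto _ _ _]/=; apply: convex_sum_ge => // -[[|j] ji] /=.
- have := potential_gen n (has_pos h); rewrite -lee_fin => /le_trans; apply.
  rewrite -addrA EFinD leeD2l // -(probability_integral_if mpos Dpos).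
  apply: ge0_le_integral_nonmeas => z.
    by rewrite lee_fin; case: ifP => _; exact: potential_ge0.
  by have := IH (rcons h (EGen z)); rewrite pool_has_pos_gen; case: (hstar z).
- case: ifP => [/pool_label_has_pos -> | _].
    by rewrite lee_fin potential_le_cap.
  apply: le_trans (leeD2l _ (IH _)); rewrite -EFinD lee_fin.
  exact/potential_ver/pool_has_pos_ver.
Qed.

Lemma expected_cost_ge pol : valid_policy pol -> (B%:E <= expected_cost pol)%E.
Proof.
move=> vpol; apply: (lee_of_geometric_lbounds (ltW B_gt0) rho_ge0 rho_lt1) => n.
apply: le_trans (cost_upto_ge_potential vpol n [::]) _.
by apply: ereal_sup_ubound; exists n.
Qed.

Definition greedy_target h : nat :=
  if has_pos h then (find hstar (pool h)).+1 else 0.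

Definition greedy_policy : policy Z R := fun h i => (i == greedy_target h)%:R.

Lemma greedy_target_lt h : (greedy_target h < (size (pool h)).+1)%N.
Proof. by rewrite /greedy_target; case: ifP; rewrite // ltnS -has_find. Qed.

Lemma greedy_policy_valid : valid_policy greedy_policy.
Proof.
move=> h; split=> [i|]; first by rewrite ler0n.
split; last exact: sum_nat_eq (greedy_target_lt h).
move=> i lti; rewrite /greedy_policy.
case: eqP => // eq_i; have := greedy_target_lt h.
by rewrite -eq_i ltnS leqNgt lti.
Qed.

Fixpoint greedy_cost n b : R :=
  if n is n'.+1 then
    if b then c_ver
    else c_rew + greedy_cost n' true * p + greedy_cost n' false * (1 - p)
  else 0.

Lemma cost_upto_greedy n h :
  cost_upto greedy_policy n h = (greedy_cost n (has_pos h))%:E.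
Proof.
elim: n h => [//|n IH] h.
rewrite [cost_upto _ _ _]/= (sum_nat_eq_weights _ (greedy_target_lt h)).
rewrite /greedy_target /=; case hp: (has_pos h) => /=.
  by rewrite pool_label_find.
rewrite (eq_integral (fun z =>
  (if hstar z then greedy_cost n true else greedy_cost n false)%:E)).
  by rewrite (probability_integral_if mpos Dpos) -EFinD addrA.
by move=> z _; rewrite IH pool_has_pos_gen hp orbF; case: (hstar z).
Qed.

Lemma greedy_cost_le_cap n b : greedy_cost n b <= cap b.
Proof.
elim: n b => [|n IH] [] /=; [exact: ltW | exact: ltW B_gt0 | by [] |].
have le_true := ler_wpM2r (ltW p_gt0) (IH true).
have le_false : greedy_cost n false * (1 - p) <= B * (1 - p).
  by rewrite ler_wpM2r ?subr_ge0 ?p_le1.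
by have := B_mulp; rewrite /= in le_true; lra.
Qed.

Lemma expected_cost_greedy_le : (expected_cost greedy_policy <= B%:E)%E.
Proof.
apply: ge_ereal_sup => _ [n _ <-].
by rewrite cost_upto_greedy lee_fin; apply: le_trans (greedy_cost_le_cap _ _) _;
  exact: cap_le_B.
Qed.

Lemma JstarE : Jstar D hstar c_rew c_ver = B%:E.
Proof.
apply/eqP; rewrite eq_le; apply/andP; split.
  apply: ge_ereal_inf; exists (expected_cost greedy_policy).
    by exists greedy_policy => //; exact: greedy_policy_valid.
  exact: expected_cost_greedy_le.
by apply: le_ereal_inf_tmp => _ [pol vpol <-]; exact: expected_cost_ge.
Qed.

End active_search.

Theorem lemma12 (d : measure_display) (Z : measurableType d) (R : realType)
  (H : set (Z -> bool)) (hstar : Z -> bool) (D : probability Z R)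
  (c_rew c_ver : R) :
  hstar \in H ->
  measurable [set z | hstar z] ->
  (0 < D [set z | hstar z])%E ->
  0 < c_rew -> 0 < c_ver ->
  Jstar D hstar c_rew c_ver =
    (c_rew / fine (D [set z | hstar z]) + c_ver)%:E.
Proof.
move=> _ mpos Dpos_gt0 c_rew_gt0 c_ver_gt0.
set p := fine (D [set z | hstar z]).
have Dpos_fin : D [set z | hstar z] \is a fin_num.
  rewrite ge0_fin_numE ?(ltW Dpos_gt0) //.
  exact: le_lt_trans (probability_le1 _ mpos) (ltry 1).
have Dpos : D [set z | hstar z] = p%:E by rewrite fineK.
have p_gt0 : 0 < p by rewrite -lte_fin -Dpos.
exact: JstarE mpos Dpos p_gt0 c_rew_gt0 c_ver_gt0.
Qed.
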